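(* The series $\mathfrak{f}_2(z)=\sum_{n\ge0}\frac{-1}{2n-1}\binom{2n}{n}^2z^n$ belongs to $\mathcal{L}^2(\mathcal{P}\setminus\{2\})$, where $\mathcal{P}$ is the set of all primes.
   Context: For a prime $p$, $\mathbb{Z}_{(p)}$ is the localization of $\mathbb{Z}$ at $(p)$; for $f=\sum a(n)z^n\in\mathbb{Z}_{(p)}[[z]]$, $f_{|p}(z)=\sum (a(n)\bmod p)z^n$. The height of a rational function $P/Q$ with $P,Q$ coprime polynomials is $\max(\deg P,\deg Q)$. For an infinite set $\mathcal{S}$ of primes, $\mathcal{L}^2(\mathcal{S})$ is the set of $f\in 1+z\mathbb{Q}[[z]]$ such that there is a constant $C>0$ independent of $p$ with: for every $p\in\mathcal{S}$, $f\in\mathbb{Z}_{(p)}[[z]]$, and there exist an integer $l_p>0$ and $A_p\in\mathbb{F}_p(z)\cap\mathbb{F}_p[[z]]$ with $f_{|p}(z)=A_p(z)f_{|p}(z^{p^{l_p}})$ and height of $A_p$ at most $Cp^{2l_p}$. *)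

From HB Require Import structures.
From mathcomp Require Import all_boot all_order all_algebra.
Set Implicit Arguments. Unset Strict Implicit. Unset Printing Implicit Defensive.
Import Order.TTheory GRing.Theory Num.Theory.
Local Open Scope ring_scope.

(* Formal power series are represented by their coefficient sequences nat -> K. *)

Definition p_integral (p : nat) (q : rat) : bool := ~~ (p %| `|denq q|)%N.

Definition red_rat (p : nat) (q : rat) : 'F_p := (numq q)%:~R / (denq q)%:~R.

Definition fps_red (p : nat) (f : nat -> rat) : nat -> 'F_p := fun n => red_rat p (f n).

Definition fps_mulpoly (K : nzRingType) (P : {poly K}) (g : nat -> K) : nat -> K :=
  fun n => \sum_(i < n.+1) P`_i * g (n - i)%N.

Definition fps_subst_pow (K : nzRingType) (g : nat -> K) (q : nat) : nat -> K :=
  fun n => if (q %| n)%N then g (n %/ q)%N else 0.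

Definition rat_height (K : nzRingType) (P Q : {poly K}) : nat :=
  maxn (size P).-1 (size Q).-1.

(* A_p in F_p(z) ∩ F_p[[z]] is written P/Q with P, Q coprime and Q(0) != 0
   (which, for a reduced fraction, is exactly membership in F_p[[z]]);
   the identity f_{|p}(z) = A_p(z) f_{|p}(z^{p^l}) is written
   Q * f_{|p}(z) = P * f_{|p}(z^{p^l}) in F_p[[z]] (equivalent as Q is invertible
   in F_p[[z]]). *)
Definition in_L2 (S : pred nat) (f : nat -> rat) : Prop :=
  f 0%N = 1 /\
  exists C : rat, 0 < C /\
    forall p : nat, prime p -> S p ->
      (forall n, p_integral p (f n)) /\
      exists l : nat, (0 < l)%N /\
        exists P Q : {poly 'F_p},
          [/\ coprimep P Q, Q.[0] != 0,
              (rat_height P Q)%:R <= C * (p ^ (2 * l))%:R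
            & forall n, fps_mulpoly Q (fps_red p f) n
                        = fps_mulpoly P (fps_subst_pow (fps_red p f) (p ^ l)) n].

Definition frak_f2 (n : nat) : rat :=
  - ((('C(2 * n, n) ^ 2)%N)%:R / (((2 * n)%N)%:Z - 1)%:~R).

From HB Require Import structures.
From mathcomp Require Import all_boot all_order all_algebra.
From mathcomp Require Import zify ring.
Set Implicit Arguments. Unset Strict Implicit. Unset Printing Implicit Defensive.
Import Order.TTheory GRing.Theory Num.Theory.
Local Open Scope ring_scope.

(* Write u(n) = binom(2n,n).  Since u(n) = (2n-1) E(n) with E(n) an integer
   (E(0) = -1 and E(k+1) = 2 Catalan(k)), the coefficients of f_2 are the
   integers -u(n) E(n); in particular they are p-integral for every p.
   Lucas' theorem modulo p gives u(pm+r) = u(r) u(m) for r < p, and hence the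
   reductions a = (f_2)_{|p} and c(n) = u(n)^2 satisfy the "digit rules"
        a(pm+r) = a(r) c(m),     c(pm+r) = c(r) c(m)       (r < p).
   A general power series argument then shows: with A, B the truncations of
   a, c below degree p, one has a(z) = A(z) c(z^p) and c(z) = B(z) c(z^p), so
        A(z^p) a(z) = A(z) B(z^p) a(z^p),
   a relation of height < p^2.  Dividing both polynomials by their gcd gives a
   reduced fraction with nonzero constant denominator, which proves
   f_2 in L^2 with l_p = 1 and C = 1 for every prime p (even p = 2). *)

Section PowerSeries.
Variable K : comNzRingType.

Definition fps_trunc (N : nat) (s : nat -> K) : {poly K} := \poly_(i < N) s i.

(* Coefficient n of P * s only depends on the first n + 1 coefficients of s. *)
Lemma fps_mulpoly_trunc (P : {poly K}) s n N :
  (n < N)%N -> fps_mulpoly P s n = (P * fps_trunc N s)`_n.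
Proof.
move=> ltnN; rewrite coefM /fps_mulpoly; apply: eq_bigr => i _.
by rewrite coef_poly; case: ifP => // /negbT; rewrite -leqNgt => h; exfalso; lia.
Qed.

Lemma coefM_prefix (R S1 S2 : {poly K}) n :
  (forall i, (i <= n)%N -> S1`_i = S2`_i) -> (R * S1)`_n = (R * S2)`_n.
Proof. by move=> eqS; rewrite !coefM; apply: eq_bigr => i _; rewrite eqS //; lia. Qed.

Lemma fps_mulpolyA (P Q : {poly K}) s n :
  fps_mulpoly P (fps_mulpoly Q s) n = fps_mulpoly (P * Q) s n.
Proof.
rewrite !(fps_mulpoly_trunc _ _ (ltnSn n)) -mulrA.
apply: coefM_prefix => i le_in; rewrite coef_poly ifT; last lia.
by apply: fps_mulpoly_trunc; lia.
Qed.

Lemma eq_fps_mulpoly (P : {poly K}) s t n :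
  (forall m, s m = t m) -> fps_mulpoly P s n = fps_mulpoly P t n.
Proof. by move=> eq_st; apply: eq_bigr => i _; rewrite eq_st. Qed.

Lemma fps_mulpolyB (P : {poly K}) s t n :
  fps_mulpoly P (fun m => s m - t m) n = fps_mulpoly P s n - fps_mulpoly P t n.
Proof. by rewrite /fps_mulpoly -sumrB; apply: eq_bigr => i _; rewrite mulrBr. Qed.

Lemma eq_fps_subst_pow (s t : nat -> K) q n :
  (forall m, s m = t m) -> fps_subst_pow s q n = fps_subst_pow t q n.
Proof. by move=> eq_st; rewrite /fps_subst_pow eq_st. Qed.

Lemma fps_subst_pow_mulpoly (P : {poly K}) s q n : (0 < q)%N ->
  fps_subst_pow (fps_mulpoly P s) q n =
  fps_mulpoly (P \Po 'X^q) (fps_subst_pow s q) n.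
Proof.
move=> q_gt0; rewrite (fps_mulpoly_trunc _ _ (ltnSn n)).
have -> : fps_subst_pow (fps_mulpoly P s) q n =
          ((P * fps_trunc n.+1 s) \Po 'X^q)`_n.
  rewrite coef_comp_poly_Xn // /fps_subst_pow; case: ifP => // _.
  by apply: fps_mulpoly_trunc; rewrite ltnS leq_div.
rewrite comp_polyM; apply: coefM_prefix => i le_in.
rewrite coef_comp_poly_Xn // !coef_poly /fps_subst_pow (ltnS i n) le_in.
by case: ifP => // _; rewrite ifT // ltnS (leq_trans (leq_div i q)).
Qed.

Lemma fps_digit_factor (S : {poly K}) s t (p : nat) :
  (0 < p)%N -> (size S <= p)%N ->
  (forall m r, (r < p)%N -> s (p * m + r)%N = S`_r * t m) ->
  forall n, fps_mulpoly S (fps_subst_pow t p) n = s n.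
Proof.
move=> p_gt0 sizeS digit n.
have ltr : (n %% p < n.+1)%N by have := leq_mod n p; lia.
rewrite /fps_mulpoly (bigD1 (Ordinal ltr)) //= big1 ?addr0.
  rewrite /fps_subst_pow -(eqn_mod_dvd _ (leq_mod n p)) modn_mod eqxx.
  have -> : (n - n %% p)%N = (p * (n %/ p))%N by rewrite {1}(divn_eq n p) addnK mulnC.
  by rewrite mulKn // {3}(divn_eq n p) mulnC digit // ltn_mod.
move=> i neq_i; rewrite /fps_subst_pow.
case: (ltnP i p) => lt_ip; last by rewrite nth_default ?mul0r // (leq_trans sizeS).
have le_in : (i <= n)%N by have := ltn_ord i; lia.
rewrite -(eqn_mod_dvd _ le_in) (modn_small lt_ip).
case: eqP => [eq_mod|]; last by rewrite mulr0.
by move: neq_i; rewrite -val_eqE /= -eq_mod eqxx.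
Qed.

End PowerSeries.

Section FieldPowerSeries.
Variable K : fieldType.

Lemma fps_mulpoly_eq0 (G : {poly K}) h : G`_0 != 0 ->
  (forall n, fps_mulpoly G h n = 0) -> forall n, h n = 0.
Proof.
move=> G0 Gh0 n; elim: n {-2}n (leqnn n) => [|N IH] n le_nN.
  have := Gh0 n; rewrite /fps_mulpoly (_ : n = 0%N); last lia.
  by rewrite big_ord1 subn0 => /eqP; rewrite mulf_eq0 (negbTE G0) => /eqP.
have := Gh0 n; rewrite /fps_mulpoly big_ord_recl subn0 big1 ?addr0.
  by move/eqP; rewrite mulf_eq0 (negbTE G0) => /eqP.
by move=> i _; rewrite IH ?mulr0 //= /bump /=; lia.
Qed.

Lemma fps_relation_coprime (P Q : {poly K}) f g : Q.[0] != 0 ->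
  (forall n, fps_mulpoly Q f n = fps_mulpoly P g n) ->
  exists P' Q' : {poly K},
    [/\ coprimep P' Q', Q'.[0] != 0, (size P' <= size P)%N, (size Q' <= size Q)%N
      & forall n, fps_mulpoly Q' f n = fps_mulpoly P' g n].
Proof.
move=> Q0 rel; set G := gcdp P Q.
have divQ : Q %/ G * G = Q by apply: divpK; exact: dvdp_gcdr.
have divP : P %/ G * G = P by apply: divpK; exact: dvdp_gcdl.
have QG0 : (Q %/ G).[0] * G.[0] != 0 by rewrite -hornerM divQ.
have Q_neq0 : Q != 0 by apply: contraNneq Q0 => ->; rewrite horner0.
move: QG0; rewrite mulf_eq0 negb_or => /andP [Q'0 G0].
exists (P %/ G), (Q %/ G); split => //; try exact: leq_divp.
  by apply: coprimep_div_gcd; rewrite Q_neq0 orbT.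
move=> n; apply/eqP; rewrite -subr_eq0; apply/eqP; move: n.
apply: (@fps_mulpoly_eq0 G); first by rewrite -horner_coef0.
move=> m; rewrite fps_mulpolyB !fps_mulpolyA.
by rewrite (mulrC G) divQ (mulrC G) divP rel subrr.
Qed.

Lemma digit_rules_relation (p : nat) (a c : nat -> K) : (0 < p)%N -> a 0%N != 0 ->
  (forall m r, (r < p)%N -> a (p * m + r)%N = a r * c m) ->
  (forall m r, (r < p)%N -> c (p * m + r)%N = c r * c m) ->
  exists P Q : {poly K},
    [/\ coprimep P Q, Q.[0] != 0, (rat_height P Q <= p ^ 2)%N
      & forall n, fps_mulpoly Q a n = fps_mulpoly P (fps_subst_pow a p) n].
Proof.
move=> p_gt0 a0 digit_a digit_c.
set A := fps_trunc p a; set B := fps_trunc p c.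
have sizeA : (size A <= p)%N by exact: size_poly.
have sizeB : (size B <= p)%N by exact: size_poly.
have a_fact n : fps_mulpoly A (fps_subst_pow c p) n = a n.
  by apply: fps_digit_factor => // m r ltrp; rewrite coef_poly ltrp digit_a.
have c_fact n : fps_mulpoly B (fps_subst_pow c p) n = c n.
  by apply: fps_digit_factor => // m r ltrp; rewrite coef_poly ltrp digit_c.
(* With c2 = c(z^(p^2)): a(z) = A(z) B(z^p) c2 and a(z^p) = A(z^p) c2. *)
set c2 := fps_subst_pow (fps_subst_pow c p) p.
have c_subst n : fps_subst_pow c p n = fps_mulpoly (B \Po 'X^p) c2 n.
  by rewrite -fps_subst_pow_mulpoly //; apply: eq_fps_subst_pow.
have a_subst n : fps_subst_pow a p n = fps_mulpoly (A \Po 'X^p) c2 n.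
  by rewrite -fps_subst_pow_mulpoly //; apply: eq_fps_subst_pow => m; rewrite a_fact.
have rel n : fps_mulpoly (A \Po 'X^p) a n
             = fps_mulpoly (A * (B \Po 'X^p)) (fps_subst_pow a p) n.
  rewrite (eq_fps_mulpoly _ _ (fun m => esym (a_fact m))) fps_mulpolyA.
  rewrite (eq_fps_mulpoly _ _ c_subst) fps_mulpolyA (eq_fps_mulpoly _ _ a_subst).
  by rewrite fps_mulpolyA -mulrA (mulrC (A \Po 'X^p)).
have Q0 : (A \Po 'X^p).[0] != 0.
  by rewrite horner_comp hornerXn expr0n gtn_eqF // horner_coef0 coef_poly p_gt0.
have [P' [Q' [coPQ Q'0 sizeP' sizeQ' rel']]] := fps_relation_coprime Q0 rel.
exists P', Q'; split => //.
have sizeAp := leq_trans sizeQ' (size_comp_poly_leq A 'X^p).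
have sizeP := leq_trans sizeP' (size_polyMleq A (B \Po 'X^p)).
have sizeBp := size_comp_poly_leq B 'X^p.
rewrite size_polyXn /= in sizeAp sizeBp.
have boundA : ((size A).-1 * p <= (p - 1) * p)%N by apply: leq_mul => //; lia.
have boundB : ((size B).-1 * p <= (p - 1) * p)%N by apply: leq_mul => //; lia.
have sq : ((p - 1) * p + p = p ^ 2)%N by rewrite -mulSnr subn1 prednK.
rewrite /rat_height geq_max; move: sizeAp sizeP sizeBp boundA boundB sq.
move: ((size A).-1 * p)%N ((size B).-1 * p)%N ((p - 1) * p)%N (p ^ 2)%N => xA xB xp p2.
move: (size P') (size Q') (size (B \Po 'X^p)) => sP sQ sB.
by move=> *; apply/andP; split; lia.
Qed.

End FieldPowerSeries.

Section Lucas.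
Variable p : nat.
Hypothesis p_prime : prime p.
Local Notation F := ('F_p).

Lemma natr_p_Fp : (p%:R : F) = 0. Proof. exact: pchar_Fp_0. Qed.

Lemma binp_Fp d : (0 < d < p)%N -> ('C(p, d)%:R : F) = 0.
Proof.
move=> d_range; have /dvdnP [q ->] := prime_dvd_bin p_prime d_range.
by rewrite natrM natr_p_Fp mulr0.
Qed.

(* Lucas: binom(pa+b, pc+d) = binom(a,c) binom(b,d) mod p, for b, d < p.
   Induction on pa+b via Pascal's rule, distinguishing whether the last
   digits b, d are zero (a borrow) or not. *)
Lemma lucas_Fp n a b c d : (b < p)%N -> (d < p)%N -> n = (p * a + b)%N ->
  ('C(n, p * c + d)%:R : F) = 'C(a, c)%:R * 'C(b, d)%:R.
Proof.
have p_gt1 := prime_gt1 p_prime.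
elim: n a b c d => [|n IH] a b c d ltbp ltdp def_n.
  have [-> ->] : a = 0%N /\ b = 0%N by lia.
  rewrite !bin0n; have -> : (p * c + d == 0)%N = (c == 0%N) && (d == 0%N) by lia.
  by case: (c == 0%N); case: (d == 0%N); rewrite /= ?mul1r ?mul0r.
case def_k: (p * c + d)%N => [|k].
  have [-> ->] : c = 0%N /\ d = 0%N by lia.
  by rewrite !bin0 mul1r.
have pred_digits x y z : (z < p)%N -> x.+1 = (p * y + z)%N ->
    exists y' z', [/\ (z' < p)%N, x = (p * y' + z')%N &
      (z = z'.+1 /\ y = y') \/ (z = 0 /\ y = y'.+1 /\ z' = p.-1)]%N.
  case: z => [|z] ltzp def_x.
    case: y def_x => [|y] def_x; first lia.
    by exists y, p.-1; split; [lia | lia | right; lia].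
  by exists y, z; split; [lia | lia | left; lia].
have [a' [b' [ltb'p def_n' digits_n]]] := pred_digits n a b ltbp def_n.
have [c' [d' [ltd'p def_k' digits_k]]] := pred_digits k c d ltdp (esym def_k).
rewrite binS natrD -def_k (IH a' b' c d) // def_k' (IH a' b' c' d') //.
move: ltbp ltdp; case: digits_n => [[-> ->] | [-> [-> ->]]];
  case: digits_k => [[-> ->] | [-> [-> ->]]] => ltbp ltdp.
- by rewrite binS natrD mulrDr.
- by rewrite (@bin_small b' p.-1) ?mulr0 ?addr0 ?bin0 //; lia.
- rewrite -mulrDr -natrD -binS prednK; last lia.
  by rewrite binp_Fp ?mulr0 ?bin0n ?mulr0 //; lia.
- by rewrite !bin0 binn !mulr1 -natrD -binS.
Qed.

Definition central_Fp (n : nat) : F := 'C(2 * n, n)%:R.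

Lemma central_Fp_vanish r : (r < p)%N -> (p <= 2 * r)%N -> central_Fp r = 0.
Proof.
move=> ltrp le_p2r; have := @lucas_Fp (2 * r) 1 (2 * r - p) 0 r.
rewrite muln0 add0n /central_Fp => ->; try lia.
by rewrite (@bin_small (2 * r - p) r) ?mulr0 //; lia.
Qed.

Lemma central_Fp_digit m r : (r < p)%N ->
  central_Fp (p * m + r) = central_Fp r * central_Fp m.
Proof.
move=> ltrp; case: (ltnP (2 * r) p) => lt2r.
  by rewrite /central_Fp (@lucas_Fp _ (2 * m) (2 * r) m r) 1?mulrC //; lia.
rewrite (central_Fp_vanish ltrp lt2r) mul0r /central_Fp.
by rewrite (@lucas_Fp _ (2 * m).+1 (2 * r - p) m r) ?(@bin_small (2 * r - p) r) ?mulr0 //; lia.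
Qed.

End Lucas.

(* The integer cofactor E(n) = binom(2n,n) / (2n-1):
   E(0) = -1 and E(k+1) = 2 binom(2k,k) - 2 binom(2k,k+1). *)
Definition central_cofactor (n : nat) : int :=
  if n is k.+1 then (2 * 'C(2 * k, k))%N%:Z - (2 * 'C(2 * k, k.+1))%N%:Z else -1.

(* The natural-number form of binom(2k+2,k+1) = (2k+1) E(k+1). *)
Lemma central_binomial_succ k :
  ('C(2 * k.+1, k.+1) + (2 * k).+1 * (2 * 'C(2 * k, k.+1)) =
   (2 * k).+1 * (2 * 'C(2 * k, k)))%N.
Proof.
have left_kk := mul_bin_left (2 * k) k.
have diag2 := mul_bin_diag (2 * k.+1) k.
have diag1 := mul_bin_diag (2 * k).+1 k.
have symm : 'C((2 * k).+1, k.+1) = 'C((2 * k).+1, k).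
  by rewrite -bin_sub; [congr 'C(_, _); lia | lia].
rewrite (_ : (2 * k.+1).-1 = (2 * k).+1) in diag2; last lia.
rewrite /= symm in diag1.
rewrite (_ : (2 * k - k = k)%N) in left_kk; last lia.
have double : 'C(2 * k.+1, k.+1) = (2 * 'C((2 * k).+1, k))%N.
  by apply/eqP; rewrite -(eqn_pmul2l (ltn0Sn k)); apply/eqP; rewrite -diag2; lia.
rewrite double; apply/eqP; rewrite -(eqn_pmul2l (ltn0Sn k)); apply/eqP.
nia.
Qed.

Lemma central_binomialE n :
  ('C(2 * n, n))%:Z = ((2 * n)%:Z - 1) * central_cofactor n.
Proof. by case: n => [|k] //=; have := central_binomial_succ k; lia. Qed.

Lemma frak_f2E n :
  frak_f2 n = ((- ('C(2 * n, n)%:Z * central_cofactor n)) : int)%:~R.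
Proof.
have w_neq0 : (((2 * n)%:Z - 1)%:~R : rat) != 0.
  by rewrite intr_eq0; apply/negP => /eqP; lia.
rewrite /frak_f2 rmorphN rmorphM /= intrM.
have -> : ('C(2 * n, n)%:R : rat) = (((2 * n)%:Z - 1) * central_cofactor n)%:~R.
  by rewrite -central_binomialE.
rewrite (_ : ('C(2 * n, n)%:Z%:~R : rat) = (((2 * n)%:Z - 1) * central_cofactor n)%:~R);
  last by rewrite central_binomialE.
rewrite !intrM; move: w_neq0; set w := (_ - 1)%:~R; set e := (central_cofactor n)%:~R.
by move=> w_neq0; congr (- _); rewrite mulrC mulrA mulKf // mulrCA mulrA.
Qed.

Lemma red_rat_int (p : nat) (z : int) : red_rat p z%:~R = z%:~R.
Proof. by rewrite /red_rat numq_int denq_int divr1. Qed.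

Lemma p_integral_int (p : nat) (z : int) : prime p -> p_integral p z%:~R.
Proof.
by move=> p_prime; rewrite /p_integral denq_int dvdn1; apply: contraTneq p_prime => ->.
Qed.

Section ReductionModp.
Variable p : nat.
Hypothesis p_prime : prime p.
Local Notation F := ('F_p).
Local Notation u := (central_Fp p).

Definition cofactor_Fp (n : nat) : F := (central_cofactor n)%:~R.
Definition odd_factor_Fp (n : nat) : F := (2 * n)%:R - 1.
Definition central_sq_Fp (n : nat) : F := u n ^+ 2.

Lemma red_frak_f2E n : fps_red p frak_f2 n = - (u n * cofactor_Fp n).
Proof. by rewrite /fps_red frak_f2E red_rat_int intrN intrM. Qed.

Lemma central_Fp_factor n : u n = odd_factor_Fp n * cofactor_Fp n.
Proof.
have := congr1 (fun z : int => (z%:~R : F)) (central_binomialE n).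
by rewrite /= intrM intrB.
Qed.

Lemma odd_factor_Fp_digit m r : odd_factor_Fp (p * m + r) = odd_factor_Fp r.
Proof.
rewrite /odd_factor_Fp (_ : (2 * (p * m + r) = p * (2 * m) + 2 * r)%N); last lia.
by rewrite natrD natrM natr_p_Fp // mul0r add0r.
Qed.

Lemma odd_factor_Fp_neq0 r : (2 * r < p)%N -> odd_factor_Fp r != 0.
Proof.
case: r => [|r] lt2r; first by rewrite /odd_factor_Fp muln0 sub0r oppr_eq0 oner_eq0.
rewrite /odd_factor_Fp (_ : (2 * r.+1)%N = (2 * r + 1).+1); last lia.
rewrite -natr1 addrK -(dvdn_pcharf (pchar_Fp p_prime)).
by apply/negP => /dvdn_leq; lia.
Qed.

Lemma red_frak_f2_digit m r : (r < p)%N ->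
  fps_red p frak_f2 (p * m + r) = fps_red p frak_f2 r * central_sq_Fp m.
Proof.
move=> ltrp; rewrite !red_frak_f2E /central_sq_Fp.
case: (ltnP (2 * r) p) => lt2r; last first.
  by rewrite central_Fp_digit // (central_Fp_vanish p_prime ltrp lt2r) !mul0r oppr0 mul0r.
have odd_neq0 := odd_factor_Fp_neq0 lt2r.
have cofactorE n : odd_factor_Fp n = odd_factor_Fp r -> cofactor_Fp n = u n / odd_factor_Fp r.
  by move=> eqw; rewrite central_Fp_factor eqw mulrC mulKf.
rewrite !cofactorE ?odd_factor_Fp_digit // central_Fp_digit //.
by rewrite mulNr; congr (- _); ring.
Qed.

Lemma central_sq_Fp_digit m r : (r < p)%N ->
  central_sq_Fp (p * m + r) = central_sq_Fp r * central_sq_Fp m.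
Proof. by move=> ltrp; rewrite /central_sq_Fp central_Fp_digit // exprMn. Qed.

End ReductionModp.

Theorem mainTheorem18 : in_L2 (fun p => p != 2%N) frak_f2.
Proof.
split; first by rewrite frak_f2E.
exists 1; split; first exact: ltr01.
move=> p p_prime _; split; first by move=> n; rewrite frak_f2E p_integral_int.
exists 1%N; split => //.
have a0 : fps_red p frak_f2 0 != 0 by rewrite red_frak_f2E /central_Fp /= mul1r opprK oner_eq0.
have [P [Q [coPQ Q0 height rel]]] := digit_rules_relation (prime_gt0 p_prime) a0
  (red_frak_f2_digit p_prime) (central_sq_Fp_digit p_prime).
by exists P, Q; split => //; rewrite mul1r muln1 ler_nat.
Qed.
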